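(* Let $g$ be an $n$-person WTT game form satisfying the standing assumptions below, let $i\in[n]$ and let $j\neq k$ be elements of $X_i$. Then exactly one of the following holds: (1) $H_j\stackrel{c}{\Longrightarrow}H_k$ for some outcome $c$, and $H_k^{\neq}(j)$ contains two profiles with distinct outcomes $a\neq b$ (both different from $c$); (2) $H_k\stackrel{d}{\Longrightarrow}H_j$ for some outcome $d$, and $H_j^{\neq}(k)$ contains two profiles with distinct outcomes $a\neq b$ (both different from $d$); (3) $H_j\stackrel{c}{\longrightarrow}H_k$ and $H_k\stackrel{d}{\longrightarrow}H_j$ for some outcomes $c\neq d$.
   Context: Let $X_1,\dots,X_n$ and $A$ be finite nonempty sets. An $n$-person game form is a map $g: X_1\times\cdots\times X_n\to A$; elements of $X=X_1\times\cdots\times X_n$ are strategy profiles, elements of $A$ are outcomes. For a direction $i\in[n]$ write $X_{-i}=\prod_{t\neq i}X_t$, and for $s\in X_i$, $y\in X_{-i}$ write $(s,y)$ for the profile with $i$-th coordinate $s$ and other coordinates $y$. The hyperplane perpendicular to direction $i$ at $s\in X_i$ is $H_s=\{x\in X: x_i=s\}$. $g$ is weakly totally tight (WTT) if for every $i\in[n]$, all $s\neq s'$ in $X_i$ and all $y\neq y'$ in $X_{-i}$, at least one of $g(s,y)=g(s,y')$, $g(s,y)=g(s',y)$, $g(s',y')=g(s',y)$, $g(s',y')=g(s,y')$ holds. A set $S\subseteq X$ is a constant region if there is $c\in A$ with $g(x)=c$ for all $x\in S$. For a direction $i$ and distinct $j,k\in X_i$, set $H_j^{\neq}(k)=\{(j,y):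 y\in X_{-i},\ g(j,y)\neq g(k,y)\}$ and $H_j^{=}(k)=H_j\setminus H_j^{\neq}(k)$. We write $H_j\stackrel{c}{\longrightarrow}H_k$ ($H_j$ dominates $H_k$ by $c$) if $g(x)=c$ for all $x\in H_j^{\neq}(k)$; we write $H_j\stackrel{c}{\Longrightarrow}H_k$ ($H_j$ strictly dominates $H_k$ by $c$) if $H_j\stackrel{c}{\longrightarrow}H_k$ and there is no outcome $d$ with $H_k\stackrel{d}{\longrightarrow}H_j$. Standing assumptions: no hyperplane of $g$ is a constant region, and no two distinct parallel hyperplanes are identical, i.e. for every $i$ and distinct $j,k\in X_i$ there is $y\in X_{-i}$ with $g(j,y)\neq g(k,y)$. *)

From mathcomp Require Import all_boot.
Set Implicit Arguments. Unset Strict Implicit. Unset Printing Implicit Defensive.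

(* An element y of X_{-i} is represented by a full profile whose i-th
   coordinate is ignored; (s, y) is  prof y s := dfwith y s  (coordinate i
   replaced by s). *)

Section GameForms.
Variables (n : nat) (X : 'I_n -> finType) (A : finType)
          (g : (forall t : 'I_n, X t) -> A).

Definition prof (i : 'I_n) (s : X i) (y : forall t, X t) : forall t, X t :=
  dfwith (T := X) y s.

Definition diff_off (i : 'I_n) (y y' : forall t, X t) : Prop :=
  exists t : 'I_n, t != i /\ y t <> y' t.

Definition WTT : Prop :=
  forall (i : 'I_n) (s s' : X i) (y y' : forall t, X t),
    s <> s' -> diff_off i y y' ->
    g (prof s y) = g (prof s y') \/ g (prof s y) = g (prof s' y) \/
    g (prof s' y') = g (prof s' y) \/ g (prof s' y') = g (prof s y').

Definition no_const_hyperplane : Prop :=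
  forall (i : 'I_n) (s : X i), ~ exists c : A, forall y, g (prof s y) = c.

Definition no_identical_hyperplanes : Prop :=
  forall (i : 'I_n) (j k : X i), j <> k -> exists y, g (prof j y) <> g (prof k y).

Definition in_Hneq (i : 'I_n) (j k : X i) (y : forall t, X t) : Prop :=
  g (prof j y) <> g (prof k y).

Definition dominates (i : 'I_n) (j k : X i) (c : A) : Prop :=
  forall y, in_Hneq j k y -> g (prof j y) = c.

Definition sdominates (i : 'I_n) (j k : X i) (c : A) : Prop :=
  dominates j k c /\ ~ exists d : A, dominates k j d.

Definition two_outcomes_avoiding (i : 'I_n) (j k : X i) (c : A) : Prop :=
  exists y1 y2, in_Hneq j k y1 /\ in_Hneq j k y2 /\
    g (prof j y1) <> g (prof j y2) /\
    g (prof j y1) <> c /\ g (prof j y2) <> c.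

End GameForms.

Definition exactly_one3 (P Q R : Prop) : Prop :=
  (P /\ ~ Q /\ ~ R) \/ (~ P /\ Q /\ ~ R) \/ (~ P /\ ~ Q /\ R).

From mathcomp Require Import all_boot.
From Stdlib Require Import Classical FunctionalExtensionality.
Set Implicit Arguments. Unset Strict Implicit. Unset Printing Implicit Defensive.

(* Applying WTT to (j, k) and two profiles y, y' of H_j^{<>}(k) shows that they
   agree on H_j or on H_k.  Hence if H_j does not dominate H_k by the outcome of
   a fixed y0, then H_k dominates H_j by the outcome g(k, y0): at least one
   domination holds.  If both hold, the two outcomes are read off the same
   profile of H_j^{<>}(k), so they differ; if only one holds, the failure of the
   other one exhibits the two outcomes required.  Exclusivity is built into
   strict domination. *)

Section Hyperplanes.
Variables (n : nat) (X : 'I_n -> finType) (A : finType)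
          (g : (forall t : 'I_n, X t) -> A).
Variable i : 'I_n.

Lemma in_HneqC (j k : X i) y : in_Hneq g j k y -> in_Hneq g k j y.
Proof. by move=> Hy E; apply: Hy; rewrite E. Qed.

Lemma prof_eq_off (s : X i) (y y' : forall t, X t) :
  ~ diff_off i y y' -> prof s y = prof s y'.
Proof.
move=> Hyy'; apply: functional_extensionality_dep => t.
rewrite /prof; case: dfwithP => [|t' t'_neq_i]; first by rewrite dfwith_in.
rewrite dfwith_out //; apply: NNPP => Hne; apply: Hyy'.
by exists t'; rewrite eq_sym.
Qed.

Variables j k : X i.

Lemma dominates_neq_dominated c d y :
  in_Hneq g j k y -> dominates g j k c -> dominates g k j d -> c <> d.
Proof.
move=> Hy Hc Hd; rewrite -(Hc y Hy) -(Hd y (in_HneqC Hy)).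
exact: Hy.
Qed.

Lemma two_outcomes_avoiding_of_not_dominates y0 c :
  in_Hneq g j k y0 -> dominates g j k c ->
  ~ dominates g k j (g (prof k y0)) -> two_outcomes_avoiding g k j c.
Proof.
move=> Hy0 Hc Hnd.
have [y1 Hy1ne] := not_all_ex_not _ _ Hnd.
have [Hy1 Hne] := imply_to_and _ _ Hy1ne.
have Hy1' : in_Hneq g j k y1 := in_HneqC Hy1.
exists y0, y1; split; [exact: in_HneqC | split => //; split; [|split]].
- by move=> E; apply: Hne.
- by rewrite -(Hc y0 Hy0) => E; apply: Hy0.
- by rewrite -(Hc y1 Hy1') => E; apply: Hy1'.
Qed.

Hypothesis hwtt : WTT g.
Hypothesis hjk : j <> k.

Lemma wtt_Hneq_agree y y' : in_Hneq g j k y -> in_Hneq g j k y' ->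
  g (prof j y) = g (prof j y') \/ g (prof k y) = g (prof k y').
Proof.
move=> Hy Hy'; have [Hd | /prof_eq_off Hd] := classic (diff_off i y y').
  have [E|[E|[E|E]]] := hwtt hjk Hd.
  - by left.
  - by case: Hy.
  - by right.
  - by case: Hy'.
by left; rewrite Hd.
Qed.

Lemma dominates_or_dominated y0 : in_Hneq g j k y0 ->
  (exists c, dominates g j k c) \/ (exists d, dominates g k j d).
Proof.
move=> Hy0; have [Hc | Hnc] := classic (dominates g j k (g (prof j y0))).
  by left; exists (g (prof j y0)).
right; exists (g (prof k y0)).
have [y1 Hy1ne] := not_all_ex_not _ _ Hnc.
have [Hy1 Hne1] := imply_to_and _ _ Hy1ne.
have Hk10 : g (prof k y1) = g (prof k y0).
  by have [E|E] := wtt_Hneq_agree Hy1 Hy0 => //; case: Hne1.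
move=> y /in_HneqC Hy.
have [Ej | Ej] := classic (g (prof j y) = g (prof j y0)).
  have [E|E] := wtt_Hneq_agree Hy Hy1; last by rewrite E.
  by case: Hne1; rewrite -E.
by have [E|E] := wtt_Hneq_agree Hy Hy0.
Qed.

End Hyperplanes.

Theorem mainTheorem3 (n : nat) (X : 'I_n -> finType) (A : finType)
    (g : (forall t : 'I_n, X t) -> A)
    (hX : forall t : 'I_n, 0 < #|X t|) (hA : 0 < #|A|)
    (hwtt : WTT g) (hconst : no_const_hyperplane g)
    (hident : no_identical_hyperplanes g)
    (i : 'I_n) (j k : X i) (hjk : j <> k) :
  exactly_one3
    (exists c : A, sdominates g j k c /\ two_outcomes_avoiding g k j c)
    (exists d : A, sdominates g k j d /\ two_outcomes_avoiding g j k d)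
    (exists c d : A, c <> d /\ dominates g j k c /\ dominates g k j d).
Proof.
have [y0 Hy0] := hident i j k hjk.
have Hy0' := in_HneqC Hy0.
have [[c Hc] | Hnc] := classic (exists c, dominates g j k c);
have [[d Hd] | Hnd] := classic (exists d, dominates g k j d).
- right; right; split; [|split].
  + by case=> c' [[_ []]]; exists d.
  + by case=> d' [[_ []]]; exists c.
  + by exists c, d; split; first exact: dominates_neq_dominated Hy0 Hc Hd.
- left; split; [|split].
  + exists c; split; first by split.
    apply: two_outcomes_avoiding_of_not_dominates Hy0 Hc _.
    by move=> Hd; apply: Hnd; eexists; exact: Hd.
  + by case=> d' [[Hd' _] _]; apply: Hnd; exists d'.
  + by case=> c' [d' [_ [_ Hd']]]; apply: Hnd; exists d'.
- right; left; split; [|split].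
  + by case=> c' [[Hc' _] _]; apply: Hnc; exists c'.
  + exists d; split; first by split.
    apply: two_outcomes_avoiding_of_not_dominates Hy0' Hd _.
    by move=> Hc; apply: Hnc; eexists; exact: Hc.
  + by case=> c' [d' [_ [Hc' _]]]; apply: Hnc; exists c'.
- by have [|] := dominates_or_dominated hwtt hjk Hy0.
Qed.
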